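(* Let $\mathcal C=(A,\bar A,B,\bar B,C,\bar C,D,\bar D,E,\bar E,F,\bar F)$ be a coefficient tuple and $\mathcal W=(Q,\bar Q,S,\bar S,R,\bar R,G,\bar G)$ a weight tuple. Suppose the Riccati system $\mathrm{Ric}(\mathcal C,\mathcal W)$ admits a unique solution $(P,\Pi)$ and that for some $\alpha_1>0$ and all $t\in[0,T]$, $$R_t+D_t^\top P_tD_t+\int_\Theta F_{t,\theta}^\top P_tF_{t,\theta}\nu(d\theta)>\alpha_1I,\qquad R_t+\bar R_t+(D_t+\bar D_t)^\top P_t(D_t+\bar D_t)+\int_\Theta(F_{t,\theta}+\bar F_{t,\theta})^\top P_t(F_{t,\theta}+\bar F_{t,\theta})\nu(d\theta)>\alpha_1I.$$ Then there exist $\bar H,\bar K\in\Phi$ such that the weight tuple $\mathcal W^{\bar H\bar K}$ satisfies Assumption (S).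
   Context: Fix $T>0$, integers $n,m\ge1$, a nonempty $\Theta\subseteq\mathbb R\setminus\{0\}$ and a $\sigma$-finite measure $\nu$ on $\Theta$ with $\int_\Theta(1\wedge\theta^2)\nu(d\theta)<\infty$ (the Lévy measure of the Poisson random measure driving the state equation). $\mathbb S^k$: symmetric $k\times k$ matrices; $M\ge\alpha I$ ($M>\alpha I$) means $M-\alpha I$ positive semidefinite (definite). $L^\infty(0,T;M)$: bounded functions; $L^2_\nu(M)$: deterministic $r:[0,T]\times\Theta\to M$ with $\sup_t\int_\Theta|r(t,\theta)|^2\nu(d\theta)<\infty$. A coefficient tuple $\mathcal C=(A,\bar A,B,\bar B,C,\bar C,D,\bar D,E,\bar E,F,\bar F)$: deterministic $A,\bar A,C,\bar C\in L^\infty(0,T;\mathbb R^{n\times n})$, $B,\bar B,D,\bar D\in L^\infty(0,T;\mathbb R^{n\times m})$, $E,\bar E\in L^2_\nu(\mathbb R^{n\times n})$, $F,\bar F\in L^2_\nu(\mathbb R^{n\times m})$. A weight tuple $\mathcal W=(Q,\bar Q,S,\bar S,R,\bar R,G,\bar G)$: $Q,\bar Q\in L^\infty(0,T;\mathbb S^n)$, $R,\bar R\in L^\infty(0,T;\mathbb S^m)$, $S,\bar S\in L^\infty(0,T;\mathbb R^{n\times m})$, $G,\bar G\in\mathbb S^n$. (These are the data of the mean-field LQ problem with state $dX_t=\{A_tX_t+\bar A_t\mathbb E[X_t]+B_tu_t+\bar B_t\mathbb E[u_t]\}dt+\{C_tX_t+\bar C_t\mathbb E[X_t]+D_tu_t+\bar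 D_t\mathbb E[u_t]\}dW_t+\int_\Theta\{E_{t,\theta}X_{t-}+\bar E_{t,\theta}\mathbb E[X_{t-}]+F_{t,\theta}u_t+\bar F_{t,\theta}\mathbb E[u_t]\}\tilde N(dt,d\theta)$ and quadratic cost with weights $\mathcal W$.) Assumption (S) for a weight tuple $(Q,\bar Q,S,\bar S,R,\bar R,G,\bar G)$: there is $\alpha_0>0$ such that for all $t$: $R_t\ge\alpha_0I$, $R_t+\bar R_t\ge\alpha_0I$, $Q_t-S_tR_t^{-1}S_t^\top\ge0$, $Q_t+\bar Q_t-(S_t+\bar S_t)(R_t+\bar R_t)^{-1}(S_t+\bar S_t)^\top\ge0$, $G\ge0$, $G+\bar G\ge0$. $\Phi$ is the set of deterministic continuously differentiable bounded functions $[0,T]\to\mathbb S^n$. For $H,K\in\Phi$, $\mathcal W^{HK}=(Q^{HK},\bar Q^{HK},S^{HK},\bar S^{HK},R^{HK},\bar R^{HK},G^{HK},\bar G^{HK})$ is defined by $Q^{HK}_t=Q_t+\dot H_t+H_tA_t+A_t^\top H_t+C_t^\top H_tC_t+\int_\Theta E_{t,\theta}^\top H_tE_{t,\theta}\nu(d\theta)$, $S^{HK}_t=S_t+H_tB_t+C_t^\top H_tD_t+\int_\Theta E_{t,\theta}^\top H_tF_{t,\theta}\nu(d\theta)$, $R^{HK}_t=R_t+D_t^\top H_tD_t+\int_\Theta F_{t,\theta}^\top H_tF_{t,\theta}\nu(d\theta)$, $G^{HK}=G-H_T$, and $\bar Q^{HK},\bar S^{HK},\bar R^{HK},\bar G^{HK}$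 determined by $Q^{HK}_t+\bar Q^{HK}_t=Q_t+\bar Q_t+\dot K_t+K_t(A_t+\bar A_t)+(A_t+\bar A_t)^\top K_t+(C_t+\bar C_t)^\top H_t(C_t+\bar C_t)+\int_\Theta(E_{t,\theta}+\bar E_{t,\theta})^\top H_t(E_{t,\theta}+\bar E_{t,\theta})\nu(d\theta)$, $S^{HK}_t+\bar S^{HK}_t=S_t+\bar S_t+K_t(B_t+\bar B_t)+(C_t+\bar C_t)^\top H_t(D_t+\bar D_t)+\int_\Theta(E_{t,\theta}+\bar E_{t,\theta})^\top H_t(F_{t,\theta}+\bar F_{t,\theta})\nu(d\theta)$, $R^{HK}_t+\bar R^{HK}_t=R_t+\bar R_t+(D_t+\bar D_t)^\top H_t(D_t+\bar D_t)+\int_\Theta(F_{t,\theta}+\bar F_{t,\theta})^\top H_t(F_{t,\theta}+\bar F_{t,\theta})\nu(d\theta)$, $G^{HK}+\bar G^{HK}=G+\bar G-K_T$. Riccati system $\mathrm{Ric}(\mathcal C,\mathcal W)$: for deterministic $P,\Pi:[0,T]\to\mathbb S^n$, with $\Sigma_{0t}=R_t+D_t^\top P_tD_t+\int_\Theta F_{t,\theta}^\top P_tF_{t,\theta}\nu(d\theta)$, $\Sigma_{1t}=R_t+\bar R_t+(D_t+\bar D_t)^\top P_t(D_t+\bar D_t)+\int_\Theta(F_{t,\theta}+\bar F_{t,\theta})^\top P_t(F_{t,\theta}+\bar F_{t,\theta})\nu(d\theta)$ (invertible): $\dot P_t+P_tA_t+A_t^\top P_t+C_t^\top P_tC_t+\int_\Theta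 E_{t,\theta}^\top P_tE_{t,\theta}\nu(d\theta)+Q_t-\big(S_t+P_tB_t+C_t^\top P_tD_t+\int_\Theta E_{t,\theta}^\top P_tF_{t,\theta}\nu(d\theta)\big)\Sigma_{0t}^{-1}\big(S_t^\top+B_t^\top P_t+D_t^\top P_tC_t+\int_\Theta F_{t,\theta}^\top P_tE_{t,\theta}\nu(d\theta)\big)=0$, $P_T=G$; $\dot\Pi_t+\Pi_t(A_t+\bar A_t)+(A_t+\bar A_t)^\top\Pi_t+(C_t+\bar C_t)^\top P_t(C_t+\bar C_t)+\int_\Theta(E_{t,\theta}+\bar E_{t,\theta})^\top P_t(E_{t,\theta}+\bar E_{t,\theta})\nu(d\theta)+Q_t+\bar Q_t-\big[(S_t+\bar S_t)+\Pi_t(B_t+\bar B_t)+(C_t+\bar C_t)^\top P_t(D_t+\bar D_t)+\int_\Theta(E_{t,\theta}+\bar E_{t,\theta})^\top P_t(F_{t,\theta}+\bar F_{t,\theta})\nu(d\theta)\big]\Sigma_{1t}^{-1}\big[(S_t+\bar S_t)^\top+(B_t+\bar B_t)^\top\Pi_t+(D_t+\bar D_t)^\top P_t(C_t+\bar C_t)+\int_\Theta(F_{t,\theta}+\bar F_{t,\theta})^\top P_t(E_{t,\theta}+\bar E_{t,\theta})\nu(d\theta)\big]=0$, $\Pi_T=G+\bar G$. *)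

From HB Require Import structures.
From mathcomp Require Import all_boot all_order all_algebra.
From mathcomp Require Import all_classical all_reals all_analysis.
Set Implicit Arguments. Unset Strict Implicit. Unset Printing Implicit Defensive.
Import Order.TTheory GRing.Theory Num.Theory.
Import numFieldNormedType.Exports.
Local Open Scope classical_set_scope.
Local Open Scope ring_scope.

Section Defs.
Variable R : realType.

Definition in0T (T t : R) : bool := (0 <= t) && (t <= T).

Definition qf n (M : 'M[R]_n) (v : 'cV[R]_n) : R := (v^T *m M *m v) ord0 ord0.
Definition psd n (M : 'M[R]_n) : Prop := forall v : 'cV[R]_n, 0 <= qf M v.
Definition pd n (M : 'M[R]_n) : Prop := forall v : 'cV[R]_n, v != 0 -> 0 < qf M v.
Definition mx_ge n (M : 'M[R]_n) (a : R) : Prop := psd (M - a%:M).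
Definition mx_gt n (M : 'M[R]_n) (a : R) : Prop := pd (M - a%:M).
Definition sym n (M : 'M[R]_n) : Prop := M^T = M.

Definition bounded_on (T : R) m n (f : R -> 'M[R]_(m, n)) : Prop :=
  exists K : R, forall t, in0T T t -> forall i j, `|f t i j| <= K.

Definition Linf (T : R) m n (f : R -> 'M[R]_(m, n)) : Prop :=
  (forall i j, measurable_fun [set t | in0T T t] (fun t => f t i j)) /\ bounded_on T f.

Definition L2nu (T : R) (nu : {measure set R -> \bar R}) (Th : set R) m n
    (f : R -> R -> 'M[R]_(m, n)) : Prop :=
  (forall t, in0T T t -> forall i j, measurable_fun Th (fun th => f t th i j)) /\
  exists K : R, forall t, in0T T t ->
    (\int[nu]_(th in Th) (\sum_i \sum_j (f t th i j) ^+ 2)%:E <= K%:E)%E.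

Definition mxint (nu : {measure set R -> \bar R}) (Th : set R) m n
    (f : R -> 'M[R]_(m, n)) : 'M[R]_(m, n) :=
  \matrix_(i, j) fine (\int[nu]_(th in Th) (f th i j)%:E)%E.

Definition is_deriv_on (T : R) m n (f df : R -> 'M[R]_(m, n)) : Prop :=
  forall t, in0T T t -> forall i j,
    (fun h : R => h^-1 * (f (t + h) i j - f t i j))
      @ within [set h | 0 <= t + h <= T] (0 : R)^' --> df t i j.

Definition inPhi (T : R) n (H dH : R -> 'M[R]_n) : Prop :=
  [/\ is_deriv_on T H dH,
      (forall i j, {within [set t | in0T T t], continuous (fun t => dH t i j)}),
      bounded_on T H &
      (forall t, in0T T t -> sym (H t))].

Record coefs n m := Coefs {
  cA : R -> 'M[R]_n; cAb : R -> 'M[R]_n;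
  cB : R -> 'M[R]_(n, m); cBb : R -> 'M[R]_(n, m);
  cC : R -> 'M[R]_n; cCb : R -> 'M[R]_n;
  cD : R -> 'M[R]_(n, m); cDb : R -> 'M[R]_(n, m);
  cE : R -> R -> 'M[R]_n; cEb : R -> R -> 'M[R]_n;
  cF : R -> R -> 'M[R]_(n, m); cFb : R -> R -> 'M[R]_(n, m) }.

Record weights n m := Weights {
  wQ : R -> 'M[R]_n; wQb : R -> 'M[R]_n;
  wS : R -> 'M[R]_(n, m); wSb : R -> 'M[R]_(n, m);
  wR : R -> 'M[R]_m; wRb : R -> 'M[R]_m;
  wG : 'M[R]_n; wGb : 'M[R]_n }.

Definition coefs_ok (T : R) (nu : {measure set R -> \bar R}) (Th : set R) n m
    (C : coefs n m) : Prop :=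
  [/\ [/\ Linf T (cA C), Linf T (cAb C), Linf T (cC C) & Linf T (cCb C)],
      [/\ Linf T (cB C), Linf T (cBb C), Linf T (cD C) & Linf T (cDb C)] &
      [/\ L2nu T nu Th (cE C), L2nu T nu Th (cEb C),
          L2nu T nu Th (cF C) & L2nu T nu Th (cFb C)]].

Definition weights_ok (T : R) n m (W : weights n m) : Prop :=
  [/\ [/\ Linf T (wQ W), Linf T (wQb W), Linf T (wS W) & Linf T (wSb W)],
      Linf T (wR W) /\ Linf T (wRb W),
      (forall t, in0T T t -> [/\ sym (wQ W t), sym (wQb W t), sym (wR W t) & sym (wRb W t)]) &
      sym (wG W) /\ sym (wGb W)].

Definition assumptionS (T : R) n m (W : weights n m) : Prop :=
  exists a0 : R, 0 < a0 /\
    (forall t, in0T T t ->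
      [/\ mx_ge (wR W t) a0,
          mx_ge (wR W t + wRb W t) a0,
          psd (wQ W t - wS W t *m invmx (wR W t) *m (wS W t)^T) &
          psd (wQ W t + wQb W t - (wS W t + wSb W t) *m invmx (wR W t + wRb W t)
                                   *m (wS W t + wSb W t)^T)]) /\
    psd (wG W) /\ psd (wG W + wGb W).

Section Tuples.
Variables (T : R) (nu : {measure set R -> \bar R}) (Th : set R) (n m : nat).
Variables (C : coefs n m) (W : weights n m).

Let A t := cA C t.  Let As t := cA C t + cAb C t.
Let B t := cB C t.  Let Bs t := cB C t + cBb C t.
Let Cm t := cC C t. Let Cs t := cC C t + cCb C t.
Let D t := cD C t.  Let Ds t := cD C t + cDb C t.
Let E t th := cE C t th. Let Es t th := cE C t th + cEb C t th.
Let F t th := cF C t th. Let Fs t th := cF C t th + cFb C t th.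

Definition QHK (H dH : R -> 'M[R]_n) t : 'M[R]_n :=
  wQ W t + dH t + H t *m A t + (A t)^T *m H t + (Cm t)^T *m H t *m Cm t
  + mxint nu Th (fun th => (E t th)^T *m H t *m E t th).
Definition SHK (H : R -> 'M[R]_n) t : 'M[R]_(n, m) :=
  wS W t + H t *m B t + (Cm t)^T *m H t *m D t
  + mxint nu Th (fun th => (E t th)^T *m H t *m F t th).
Definition RHK (H : R -> 'M[R]_n) t : 'M[R]_m :=
  wR W t + (D t)^T *m H t *m D t
  + mxint nu Th (fun th => (F t th)^T *m H t *m F t th).
Definition QHKs (H K dK : R -> 'M[R]_n) t : 'M[R]_n :=
  wQ W t + wQb W t + dK t + K t *m As t + (As t)^T *m K t
  + (Cs t)^T *m H t *m Cs t
  + mxint nu Th (fun th => (Es t th)^T *m H t *m Es t th).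
Definition SHKs (H K : R -> 'M[R]_n) t : 'M[R]_(n, m) :=
  wS W t + wSb W t + K t *m Bs t + (Cs t)^T *m H t *m Ds t
  + mxint nu Th (fun th => (Es t th)^T *m H t *m Fs t th).
Definition RHKs (H : R -> 'M[R]_n) t : 'M[R]_m :=
  wR W t + wRb W t + (Ds t)^T *m H t *m Ds t
  + mxint nu Th (fun th => (Fs t th)^T *m H t *m Fs t th).

Definition WHK (H dH K dK : R -> 'M[R]_n) : weights n m :=
  Weights (QHK H dH) (fun t => QHKs H K dK t - QHK H dH t)
          (SHK H) (fun t => SHKs H K t - SHK H t)
          (RHK H) (fun t => RHKs H t - RHK H t)
          (wG W - H T) ((wG W + wGb W - K T) - (wG W - H T)).

Definition Sigma0 (P : R -> 'M[R]_n) t : 'M[R]_m := RHK P t.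
Definition Sigma1 (P : R -> 'M[R]_n) t : 'M[R]_m := RHKs P t.

Definition ric_sol (P dP Pi dPi : R -> 'M[R]_n) : Prop :=
  [/\ inPhi T P dP, inPhi T Pi dPi,
      (forall t, in0T T t ->
        [/\ Sigma0 P t \in unitmx, Sigma1 P t \in unitmx,
            dP t + P t *m A t + (A t)^T *m P t + (Cm t)^T *m P t *m Cm t
            + mxint nu Th (fun th => (E t th)^T *m P t *m E t th) + wQ W t
            - (wS W t + P t *m B t + (Cm t)^T *m P t *m D t
               + mxint nu Th (fun th => (E t th)^T *m P t *m F t th))
              *m invmx (Sigma0 P t)
              *m ((wS W t)^T + (B t)^T *m P t + (D t)^T *m P t *m Cm t
                  + mxint nu Th (fun th => (F t th)^T *m P t *m E t th)) = 0 &
            dPi t + Pi t *m As t + (As t)^T *m Pi t + (Cs t)^T *m P t *m Cs t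
            + mxint nu Th (fun th => (Es t th)^T *m P t *m Es t th)
            + (wQ W t + wQb W t)
            - ((wS W t + wSb W t) + Pi t *m Bs t + (Cs t)^T *m P t *m Ds t
               + mxint nu Th (fun th => (Es t th)^T *m P t *m Fs t th))
              *m invmx (Sigma1 P t)
              *m ((wS W t + wSb W t)^T + (Bs t)^T *m Pi t + (Ds t)^T *m P t *m Cs t
                  + mxint nu Th (fun th => (Fs t th)^T *m P t *m Es t th)) = 0]),
      P T = wG W &
      Pi T = wG W + wGb W].

End Tuples.
End Defs.

From HB Require Import structures.
From mathcomp Require Import all_boot all_order all_algebra.
From mathcomp Require Import all_classical all_reals all_analysis.
Import Order.TTheory GRing.Theory Num.Theory.
Import numFieldNormedType.Exports.
Local Open Scope classical_set_scope.
Local Open Scope ring_scope.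

(* Take H = P and K = Pi.  Then the Riccati equations say exactly that the
   two Schur complements Q^{HK} - S^{HK} (R^{HK})^-1 (S^{HK})^T and its
   mean-field analogue vanish, the terminal weights G - P_T and
   G + Gbar - Pi_T vanish, and R^{HK} = Sigma_0, R^{HK} + Rbar^{HK} = Sigma_1
   are bounded below by alpha_1 by hypothesis. *)

Lemma mxint_tr (R : realType) (nu : {measure set R -> \bar R}) (Th : set R) p q
  (f : R -> 'M[R]_(p, q)) :
  (mxint nu Th f)^T = mxint nu Th (fun th => (f th)^T).
Proof.
apply/matrixP => i j; rewrite !mxE; congr (fine _).
by apply: eq_integral => x _; rewrite mxE.
Qed.

Lemma psd0 (R : realType) p : psd (0 : 'M[R]_p).
Proof. by move=> v; rewrite /qf mulmx0 mul0mx mxE. Qed.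

Lemma pd_psd (R : realType) p (M : 'M[R]_p) : pd M -> psd M.
Proof.
move=> pdM v; have [->|/pdM/ltW //] := eqVneq v 0.
by rewrite /qf mulmx0 mxE.
Qed.

Lemma mx_gt_ge (R : realType) p (M : 'M[R]_p) a : mx_gt M a -> mx_ge M a.
Proof. exact: pd_psd. Qed.

Section RiccatiSchurComplement.
Context {R : realType} {T : R} {nu : {measure set R -> \bar R}} {Th : set R}.
Context {n m : nat} {C : coefs R n m} {W : weights R n m}.
Context {P dP Pi dPi : R -> 'M[R]_n}.

Lemma trmx_SHK t : sym (P t) ->
  (SHK nu Th C W P t)^T =
  (wS W t)^T + (cB C t)^T *m P t + (cD C t)^T *m P t *m cC C t
  + mxint nu Th (fun th => (cF C t th)^T *m P t *m cE C t th).
Proof.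
move=> symP; rewrite !linearD /= !trmx_mul !trmxK symP mxint_tr !mulmxA.
by congr (_ + _); congr (mxint _ _ _); apply: funext => th;
  rewrite !trmx_mul trmxK symP mulmxA.
Qed.

Lemma trmx_SHKs t : sym (P t) -> sym (Pi t) ->
  (SHKs nu Th C W P Pi t)^T =
  (wS W t + wSb W t)^T + (cB C t + cBb C t)^T *m Pi t
  + (cD C t + cDb C t)^T *m P t *m (cC C t + cCb C t)
  + mxint nu Th (fun th =>
      (cF C t th + cFb C t th)^T *m P t *m (cE C t th + cEb C t th)).
Proof.
move=> symP symPi; rewrite [in LHS]linearD [in LHS]linearD [in LHS]linearD /=.
rewrite !trmx_mul !trmxK symP symPi mxint_tr !mulmxA.
by congr (_ + _); congr (mxint _ _ _); apply: funext => th;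
  rewrite !trmx_mul trmxK symP mulmxA.
Qed.

Hypothesis ric : ric_sol T nu Th C W P dP Pi dPi.

Lemma ric_schurHK0 t : in0T T t ->
  QHK nu Th C W P dP t
  - SHK nu Th C W P t *m invmx (RHK nu Th C W P t) *m (SHK nu Th C W P t)^T = 0.
Proof.
move=> t0T; have [[_ _ _ /(_ t t0T) symP] _ /(_ t t0T) [_ _ ricP _] _ _] := ric.
rewrite trmx_SHK // -[RHS]ricP /QHK; congr (_ - _).
(* move the weight Q from the front to the back of the six-term sum *)
by rewrite [in LHS](AC (6) (2*3*4*5*6*1)).
Qed.

Lemma ric_schurHKs0 t : in0T T t ->
  QHKs nu Th C W P Pi dPi t
  - SHKs nu Th C W P Pi t *m invmx (RHKs nu Th C W P t)
    *m (SHKs nu Th C W P Pi t)^T = 0.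
Proof.
move=> t0T; have [[_ _ _ /(_ t t0T) symP] [_ _ _ /(_ t t0T) symPi] /(_ t t0T)
  [_ _ _ ricPi] _ _] := ric.
rewrite trmx_SHKs // -[RHS]ricPi /QHKs; congr (_ - _).
by rewrite [in LHS](AC (6) (2*3*4*5*6*1)).
Qed.

End RiccatiSchurComplement.

Theorem theorem4p2 (R : realType) (T : R) (n m : nat) (Th : set R)
  (nu : {measure set R -> \bar R}) (C : coefs R n m) (W : weights R n m) :
  0 < T -> (0 < n)%N -> (0 < m)%N ->
  measurable Th -> Th !=set0 -> ~ Th 0 -> sigma_finite Th nu ->
  (\int[nu]_(th in Th) (Num.min 1 (th ^+ 2))%:E < +oo)%E ->
  coefs_ok T nu Th C -> weights_ok T W ->
  forall P dP Pi dPi : R -> 'M[R]_n,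
  ric_sol T nu Th C W P dP Pi dPi ->
  (forall P' dP' Pi' dPi' : R -> 'M[R]_n,
     ric_sol T nu Th C W P' dP' Pi' dPi' ->
     forall t, in0T T t -> P' t = P t /\ Pi' t = Pi t) ->
  (exists a1 : R, 0 < a1 /\ forall t, in0T T t ->
     mx_gt (Sigma0 nu Th C W P t) a1 /\ mx_gt (Sigma1 nu Th C W P t) a1) ->
  exists H dH K dK : R -> 'M[R]_n,
    [/\ inPhi T H dH, inPhi T K dK &
        assumptionS T (WHK T nu Th C W H dH K dK)].
Proof.
move=> _ _ _ _ _ _ _ _ _ _ P dP Pi dPi ric _ [a1 [a1_gt0 Sigma_gt]].
have [PhiP PhiPi _ PT PiT] := ric.
exists P, dP, Pi, dPi; split=> //; exists a1; split=> //; split; last first.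
  by rewrite /= PT PiT subrr subrKC subrr; split; exact: psd0.
move=> t t0T; have [Sigma0_gt Sigma1_gt] := Sigma_gt t t0T.
split=> /=.
- exact: mx_gt_ge.
- by rewrite subrKC; exact: mx_gt_ge.
- by rewrite (ric_schurHK0 ric _ t0T); exact: psd0.
- by rewrite !subrKC (ric_schurHKs0 ric _ t0T); exact: psd0.
Qed.
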